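(* Let $\mathbf{D}$ be a VC-database (a single VC-table $\mathbf{R}$ with global condition $\Phi(\mathbf{R})$) and let $u$ be a statement that is an update $\mathrm{upd}_{\mathit{Set},\theta}$, a delete $\mathrm{del}_{\theta}$, or a constant insert $\mathrm{ins}_{t}$, with its result $u(\mathbf{D})$ on VC-tables defined as in the context. Then $\mathrm{Mod}(u(\mathbf{D}))=u(\mathrm{Mod}(\mathbf{D}))$, where $u(\mathrm{Mod}(\mathbf{D}))=\{u(D)\mid D\in\mathrm{Mod}(\mathbf{D})\}$.
   Context: Fix a universal domain $\mathbb{D}$, a schema $(A_1,\ldots,A_n)$ and a countable set of variables $\Sigma$. Symbolic expressions are built from variables, constants, $+,-,\times,\div$, conditional expressions $\text{if } e_1 \text{ then } e_2 \text{ else } e_3$, comparisons $=,\neq,<,\leq,>,\geq$, $\wedge,\vee,\neg$, $\mathbf{isnull}$, $\mathbf{true}$, $\mathbf{false}$. A VC-table $\mathbf{R}$ is a finite set of tuples $\mathbf{t}$ of arity $n$ whose entries are symbolic expressions, each with a local condition $\phi(\mathbf{R},\mathbf{t})$ (a Boolean symbolic expression); set $\phi(\mathbf{R},\mathbf{t})=\mathbf{false}$ for $\mathbf{t}\notin\mathbf{R}$. It carries a global condition $\Phi(\mathbf{R})$. An assignment $\lambda:\Sigma\to\mathbb{D}$ is extended to expressions homomorphically (operators applied to evaluated arguments, $\lambda(\text{if } e_1 \text{ then } e_2 \text{ else } e_3)=\lambda(e_2)$ if $\lambda(e_1)$ holds and $\lambda(e_3)$ otherwise), to tuples componentwise, and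 to VC-tables by $\lambda(\mathbf{R})=\{\lambda(\mathbf{t})\mid\mathbf{t}\in\mathbf{R}\wedge\lambda(\phi(\mathbf{R},\mathbf{t}))\}$. The set of possible worlds is $\mathrm{Mod}(\mathbf{R})=\{D\mid\exists\lambda:\lambda(\mathbf{R})=D\wedge\lambda(\Phi(\mathbf{R}))\}$. On concrete relations: $\mathrm{upd}_{\mathit{Set},\theta}(R)=\{\mathit{Set}(t)\mid t\in R,\theta(t)\}\cup\{t\mid t\in R,\neg\theta(t)\}$ with $\mathit{Set}=(e_1,\ldots,e_n)$, $\mathrm{del}_{\theta}(R)=\{t\in R\mid\neg\theta(t)\}$, $\mathrm{ins}_t(R)=R\cup\{t\}$. On VC-tables: for $\mathbf{t}$, $\theta(\mathbf{t})$ and $e_i(\mathbf{t})$ denote substituting each attribute reference $A_j$ by $\mathbf{t}.A_j$. Update: for each $\mathbf{t}\in\mathbf{R}$ choose fresh variables $x_{\mathbf{t},A_1},\ldots,x_{\mathbf{t},A_n}$ (distinct, not occurring in $\mathbf{R}$ or its conditions) and let $\mathbf{t}_{new}=(x_{\mathbf{t},A_1},\ldots,x_{\mathbf{t},A_n})$; then $\mathrm{upd}_{\mathit{Set},\theta}(\mathbf{R})=\{\mathbf{t}_{new}\mid\mathbf{t}\in\mathbf{R}\}$ with $\phi(\cdot,\mathbf{t}_{new})=\phi(\mathbf{R},\mathbf{t})$ and global condition $\Phi(\mathbf{R})\wedge\bigwedge_{\mathbf{t}\in\mathbf{R}}\bigwedge_{i=1}^n x_{\mathbf{t},A_i}=(\text{if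 }\theta(\mathbf{t})\text{ then }e_i(\mathbf{t})\text{ else }\mathbf{t}.A_i)$. Delete: $\mathrm{del}_\theta(\mathbf{R})=\mathbf{R}$ with local conditions $\phi(\mathbf{R},\mathbf{t})\wedge\neg\theta(\mathbf{t})$ and global condition $\Phi(\mathbf{R})$. Constant insert: $\mathrm{ins}_t(\mathbf{R})=\mathbf{R}\cup\{t\}$ with $\phi(\cdot,t)=\mathbf{true}$, other local conditions unchanged, global condition $\Phi(\mathbf{R})$. *)

From mathcomp Require Import all_boot.
From Stdlib Require List.

Set Implicit Arguments.
Unset Strict Implicit.
Unset Printing Implicit Defensive.

Record domain := Domain {
  dcar :> Type;
  ddec : forall x y : dcar, {x = y} + {x <> y};
  dnull : dcar;
  dtrue : dcar;
  dfalse : dcar;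
  dtrue_neq_dfalse : dtrue <> dfalse;
  dadd : dcar -> dcar -> dcar;
  dsub : dcar -> dcar -> dcar;
  dmul : dcar -> dcar -> dcar;
  ddiv : dcar -> dcar -> dcar;
  dlt : dcar -> dcar -> bool;
  dle : dcar -> dcar -> bool
}.

(* Symbolic expressions over atoms of type [A]:                        *)
(*  A = nat      : expressions over the variables Sigma (VC-tables),    *)
(*  A = 'I_n     : expressions over attribute references A_1..A_n       *)
(*                 (conditions theta and Set-expressions of statements). *)
Inductive expr (D : domain) (A : Type) : Type :=
  | Atom of A
  | Const of D
  | Plus of expr D A & expr D A
  | Minus of expr D A & expr D A
  | Times of expr D A & expr D A
  | Div of expr D A & expr D A
  | Ite of expr D A & expr D A & expr D A
  | Eq of expr D A & expr D A
  | Neq of expr D A & expr D A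
  | Lt of expr D A & expr D A
  | Le of expr D A & expr D A
  | Gt of expr D A & expr D A
  | Ge of expr D A & expr D A
  | And of expr D A & expr D A
  | Or of expr D A & expr D A
  | Not of expr D A
  | IsNull of expr D A
  | ETrue
  | EFalse.

Arguments ETrue {D A}.
Arguments Atom {D A}.
Arguments Const {D A}.
Arguments Plus {D A}.
Arguments Minus {D A}.
Arguments Times {D A}.
Arguments Div {D A}.
Arguments Ite {D A}.
Arguments Eq {D A}.
Arguments Neq {D A}.
Arguments Lt {D A}.
Arguments Le {D A}.
Arguments Gt {D A}.
Arguments Ge {D A}.
Arguments And {D A}.
Arguments Or {D A}.
Arguments Not {D A}.
Arguments IsNull {D A}.
Arguments EFalse {D A}.

Section Sem.
Variable D : domain.

Definition is_true_val (v : D) : bool := if ddec v (dtrue D) then true else false.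
Definition of_bool (b : bool) : D := if b then dtrue D else dfalse D.

Definition holds (v : D) : Prop := v = dtrue D.

Fixpoint eval (A : Type) (rho : A -> D) (e : expr D A) : D :=
  match e with
  | Atom a => rho a
  | Const c => c
  | Plus e1 e2 => dadd (eval rho e1) (eval rho e2)
  | Minus e1 e2 => dsub (eval rho e1) (eval rho e2)
  | Times e1 e2 => dmul (eval rho e1) (eval rho e2)
  | Div e1 e2 => ddiv (eval rho e1) (eval rho e2)
  | Ite e1 e2 e3 => if is_true_val (eval rho e1) then eval rho e2 else eval rho e3
  | Eq e1 e2 => of_bool (if ddec (eval rho e1) (eval rho e2) then true else false)
  | Neq e1 e2 => of_bool (if ddec (eval rho e1) (eval rho e2) then false else true)
  | Lt e1 e2 => of_bool (dlt (eval rho e1) (eval rho e2))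
  | Le e1 e2 => of_bool (dle (eval rho e1) (eval rho e2))
  | Gt e1 e2 => of_bool (dlt (eval rho e2) (eval rho e1))
  | Ge e1 e2 => of_bool (dle (eval rho e2) (eval rho e1))
  | And e1 e2 => of_bool (is_true_val (eval rho e1) && is_true_val (eval rho e2))
  | Or e1 e2 => of_bool (is_true_val (eval rho e1) || is_true_val (eval rho e2))
  | Not e1 => of_bool (~~ is_true_val (eval rho e1))
  | IsNull e1 => of_bool (if ddec (eval rho e1) (dnull D) then true else false)
  | ETrue => dtrue D
  | EFalse => dfalse D
  end.

Fixpoint subst (A B : Type) (f : A -> expr D B) (e : expr D A) : expr D B :=
  match e with
  | Atom a => f a
  | Const c => Const c
  | Plus e1 e2 => Plus (subst f e1) (subst f e2)
  | Minus e1 e2 => Minus (subst f e1) (subst f e2)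
  | Times e1 e2 => Times (subst f e1) (subst f e2)
  | Div e1 e2 => Div (subst f e1) (subst f e2)
  | Ite e1 e2 e3 => Ite (subst f e1) (subst f e2) (subst f e3)
  | Eq e1 e2 => Eq (subst f e1) (subst f e2)
  | Neq e1 e2 => Neq (subst f e1) (subst f e2)
  | Lt e1 e2 => Lt (subst f e1) (subst f e2)
  | Le e1 e2 => Le (subst f e1) (subst f e2)
  | Gt e1 e2 => Gt (subst f e1) (subst f e2)
  | Ge e1 e2 => Ge (subst f e1) (subst f e2)
  | And e1 e2 => And (subst f e1) (subst f e2)
  | Or e1 e2 => Or (subst f e1) (subst f e2)
  | Not e1 => Not (subst f e1)
  | IsNull e1 => IsNull (subst f e1)
  | ETrue => ETrue
  | EFalse => EFalse
  end.

Fixpoint occurs (x : nat) (e : expr D nat) : Prop :=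
  match e with
  | Atom y => x = y
  | Const _ | ETrue | EFalse => False
  | Plus e1 e2 | Minus e1 e2 | Times e1 e2 | Div e1 e2
  | Eq e1 e2 | Neq e1 e2 | Lt e1 e2 | Le e1 e2 | Gt e1 e2 | Ge e1 e2
  | And e1 e2 | Or e1 e2 => occurs x e1 \/ occurs x e2
  | Ite e1 e2 e3 => occurs x e1 \/ occurs x e2 \/ occurs x e3
  | Not e1 | IsNull e1 => occurs x e1
  end.

Variable n : nat.

Definition ctuple := 'I_n -> D.
Definition crel := ctuple -> Prop.

(* VC-tables: a finite collection of symbolic tuples, each with its    *)
(* local condition, plus a global condition.                            *)
Definition vtuple := 'I_n -> expr D nat.
Record vctable := VCTable {
  vrows : seq (vtuple * expr D nat);
  vglobal : expr D nat
}.

Definition inst (lam : nat -> D) (R : vctable) : crel :=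
  fun r => exists row, List.In row (vrows R) /\ holds (eval lam row.2) /\
                       r = (fun i => eval lam (row.1 i)).

Definition Mod (R : vctable) : crel -> Prop :=
  fun Dr => exists lam : nat -> D, inst lam R = Dr /\ holds (eval lam (vglobal R)).

Inductive stmt :=
  | Upd of ('I_n -> expr D 'I_n) & expr D 'I_n
  | Del of expr D 'I_n
  | Ins of ctuple.

Definition capply (u : stmt) (Rc : crel) : crel :=
  match u with
  | Upd set theta => fun r =>
      (exists t, Rc t /\ holds (eval t theta) /\ r = (fun i => eval t (set i)))
      \/ (Rc r /\ ~ holds (eval r theta))
  | Del theta => fun r => Rc r /\ ~ holds (eval r theta)
  | Ins t => fun r => Rc r \/ r = t
  end.

Definition image_stmt (u : stmt) (M : crel -> Prop) : crel -> Prop :=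
  fun Dr => exists D0, M D0 /\ Dr = capply u D0.

(* Fresh variables: fv k i is the variable x_{t,A_i} for the k-th tuple  *)
(* t of R; they must be pairwise distinct and not occur in R (entries,   *)
(* local conditions) nor in the global condition.                       *)
Definition fresh_vars (R : vctable) (fv : nat -> 'I_n -> nat) : Prop :=
  (forall k1 k2 i1 i2, k1 < size (vrows R) -> k2 < size (vrows R) ->
      fv k1 i1 = fv k2 i2 -> k1 = k2 /\ i1 = i2) /\
  (forall k i, k < size (vrows R) ->
      ~ occurs (fv k i) (vglobal R) /\
      (forall row, List.In row (vrows R) ->
         ~ occurs (fv k i) row.2 /\ forall j, ~ occurs (fv k i) (row.1 j))).

Definition vc_upd_rows (fv : nat -> 'I_n -> nat) (rs : seq (vtuple * expr D nat)) :=
  map (fun p : nat * (vtuple * expr D nat) =>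
         ((fun i => Atom (fv p.1 i)) : vtuple, p.2.2))
      (zip (iota 0 (size rs)) rs).

Definition vc_upd_global (set : 'I_n -> expr D 'I_n) (theta : expr D 'I_n)
    (fv : nat -> 'I_n -> nat) (R : vctable) : expr D nat :=
  foldr (fun (p : nat * (vtuple * expr D nat)) acc =>
           foldr (fun (i : 'I_n) acc' =>
                    And acc'
                      (Eq (Atom (fv p.1 i))
                          (Ite (subst p.2.1 theta) (subst p.2.1 (set i)) (p.2.1 i))))
                 acc (enum 'I_n))
        (vglobal R) (zip (iota 0 (size (vrows R))) (vrows R)).

Definition vc_apply (u : stmt) (fv : nat -> 'I_n -> nat) (R : vctable) : vctable :=
  match u with
  | Upd set theta => VCTable (vc_upd_rows fv (vrows R)) (vc_upd_global set theta fv R)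
  | Del theta =>
      VCTable (map (fun row : vtuple * expr D nat =>
                      (row.1, And row.2 (Not (subst row.1 theta)))) (vrows R))
              (vglobal R)
  | Ins t =>
      VCTable (vrows R ++ [:: ((fun i => Const (t i)) : vtuple, ETrue)]) (vglobal R)
  end.

End Sem.

From mathcomp Require Import all_boot zify.
From Stdlib Require Import FunctionalExtensionality PropExtensionality.
From Stdlib Require List.

Set Implicit Arguments.
Unset Strict Implicit.
Unset Printing Implicit Defensive.

(* Deletion and constant insertion act row by row on a VC-table and commute
   with every assignment, so both sides have the same worlds for the same
   assignment.  For an update, the k-th row is replaced by fresh variables
   constrained by the global condition to equal the updated k-th tuple; hence
   every assignment satisfying the new global condition yields the updated
   world, and conversely any assignment of the old table can be extended,
   independently of its values elsewhere, to the fresh variables because they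
   are pairwise distinct and occur nowhere in the old table. *)

Lemma In_zip_r (S T : Type) (s : seq S) (t : seq T) k x :
  List.In (k, x) (zip s t) -> List.In x t.
Proof.
elim: s t => [|a s IH] [|b t] //= [[_ <-] | /IH]; by [left | right].
Qed.

Lemma In_zip_iota_exists (T : Type) (rs : seq T) m x :
  List.In x rs -> exists k, List.In (k, x) (zip (iota m (size rs)) rs).
Proof.
elim: rs m => [|a rs IH] m //= [<- | /(IH m.+1) [k zip_k]].
- by exists m; left.
- by exists k; right.
Qed.

Lemma In_zip_iota_nth (T : Type) (rs : seq T) m k x d :
  List.In (k, x) (zip (iota m (size rs)) rs) ->
  m <= k < m + size rs /\ x = nth d rs (k - m).
Proof.
elim: rs m => [|a rs IH] m //= [[<- <-] | /IH [k_bound ->]].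
- by rewrite subnn; split => //; lia.
- have -> : k - m = (k - m.+1).+1 by lia.
  by split => //; lia.
Qed.

Section Semantics.
Variable D : domain.

Lemma is_true_valP (v : D) : reflect (holds v) (is_true_val v).
Proof. by rewrite /is_true_val /holds; case: ddec => ?; constructor. Qed.

Lemma holds_of_bool b : holds (of_bool D b) <-> b.
Proof.
case: b; rewrite /holds /of_bool; split => // eq_tf.
by case: (@dtrue_neq_dfalse D).
Qed.

Lemma eval_subst (A B : Type) (f : A -> expr D B) (rho : B -> D) e :
  eval rho (subst f e) = eval (fun a => eval rho (f a)) e.
Proof. by induction e; rewrite /= ?IHe1 ?IHe2 ?IHe3 ?IHe. Qed.

Lemma eval_eq_on (rho rho' : nat -> D) e :
  (forall x, occurs x e -> rho x = rho' x) -> eval rho e = eval rho' e.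
Proof.
induction e => /= eq_occ; first exact: eq_occ.
all: rewrite ?IHe1 ?IHe2 ?IHe3 ?IHe // => x occ_x; apply: eq_occ; tauto.
Qed.

Section Connectives.
Variables (A : Type) (rho : A -> D).

Lemma holds_And a b :
  holds (eval rho (And a b)) <-> holds (eval rho a) /\ holds (eval rho b).
Proof.
rewrite /= holds_of_bool.
by split => [/andP [/is_true_valP ? /is_true_valP ?] |
             [/is_true_valP -> /is_true_valP ->]].
Qed.

Lemma holds_Eq a b : holds (eval rho (Eq a b)) <-> eval rho a = eval rho b.
Proof. by rewrite /= holds_of_bool; case: ddec. Qed.

Lemma holds_Not a : holds (eval rho (Not a)) <-> ~ holds (eval rho a).
Proof.
rewrite /= holds_of_bool.
by split => [/negP nh /is_true_valP | nh]; last apply/negP => /is_true_valP.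
Qed.

Lemma holds_foldr_And (I : eqType) (F : I -> expr D A) g s :
  holds (eval rho (foldr (fun i acc => And acc (F i)) g s)) <->
  holds (eval rho g) /\ forall i, i \in s -> holds (eval rho (F i)).
Proof.
elim: s => [|j s IH] /=; first by split => [hg | [hg _]].
rewrite holds_And IH; split.
- by case=> [[hg hF] hj]; split => // i; rewrite in_cons => /predU1P [-> | /hF].
- case=> hg hF; split; first split => // i i_s.
  all: by apply: hF; rewrite in_cons ?i_s ?orbT ?eqxx.
Qed.

End Connectives.

End Semantics.

Section Tables.
Variables (D : domain) (n : nat).
Implicit Types (R : vctable D n) (lam : nat -> D) (Rc : crel D n).

Lemma crel_ext (P Q : crel D n) : (forall r, P r <-> Q r) -> P = Q.
Proof.
by move=> PQ; apply: functional_extensionality => r; apply: propositional_extensionality.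
Qed.

Definition row_tuple lam (row : vtuple D n * expr D nat) : ctuple D n :=
  fun i => eval lam (row.1 i).

Definition tuple_upd (set : 'I_n -> expr D 'I_n) (theta : expr D 'I_n)
    (t : ctuple D n) : ctuple D n :=
  fun i => if is_true_val (eval t theta) then eval t (set i) else t i.

Lemma capply_UpdE set theta Rc r :
  capply (Upd set theta) Rc r <-> exists2 t, Rc t & r = tuple_upd set theta t.
Proof.
split.
- case=> [[t [Rt [/is_true_valP th ->]]] | [Rr /is_true_valP th]].
  + by exists t => //; apply: functional_extensionality => i; rewrite /tuple_upd th.
  + by exists r => //; apply: functional_extensionality => i; rewrite /tuple_upd (negbTE th).
- case=> t Rt ->; rewrite /tuple_upd; case: is_true_valP => th; [left | right].
  + by exists t.
  + by split => // /th.
Qed.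

Lemma inst_eq_on_rows lam lam' R :
  (forall row, List.In row (vrows R) ->
     eval lam' row.2 = eval lam row.2 /\ row_tuple lam' row = row_tuple lam row) ->
  inst lam' R = inst lam R.
Proof.
move=> eq_rows; apply: crel_ext => r.
split=> -[row [Rrow [hrow ->]]]; exists row; have [E1 E2] := eq_rows _ Rrow.
- by rewrite /holds -E1; do !split.
- by rewrite /holds E1; do !split.
Qed.

Lemma inst_vc_del theta fv R lam :
  inst lam (vc_apply (Del theta) fv R) = capply (Del theta) (inst lam R).
Proof.
apply: crel_ext => r; split.
- case=> _ [/List.in_map_iff [row [<- Rrow]] [/holds_And [hrow /holds_Not not_theta] ->]].
  by split; [exists row | rewrite eval_subst in not_theta].
- case=> -[row [Rrow [hrow ->]]] not_theta.
  exists (row.1, And row.2 (Not (subst row.1 theta))); split.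
    by apply/List.in_map_iff; exists row.
  by split => //; apply/holds_And; split => //; apply/holds_Not; rewrite eval_subst.
Qed.

Lemma inst_vc_ins t fv R lam :
  inst lam (vc_apply (Ins t) fv R) = capply (Ins t) (inst lam R).
Proof.
apply: crel_ext => r; split.
- case=> row [/List.in_app_iff [Rrow | [<- | []]] [hrow ->]].
  + by left; exists row.
  + by right.
- case=> [[row [Rrow [hrow ->]]] | ->].
  + by exists row; split => //; apply/List.in_app_iff; left.
  + exists ((fun i => Const (t i)) : vtuple D n, ETrue).
    by split => //; apply/List.in_app_iff; right; left.
Qed.

Lemma holds_vc_upd_global set theta fv R lam :
  holds (eval lam (vc_upd_global set theta fv R)) <->
  holds (eval lam (vglobal R)) /\
  forall k row, List.In (k, row) (zip (iota 0 (size (vrows R))) (vrows R)) ->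
    forall i, lam (fv k i) = tuple_upd set theta (row_tuple lam row) i.
Proof.
rewrite /vc_upd_global; elim: (zip _ _) => [|[k row] l IH] /=.
  by split => [hg | [hg _]].
have eq_entry i : holds (eval lam (Eq (Atom (fv k i))
                    (Ite (subst row.1 theta) (subst row.1 (set i)) (row.1 i)))) <->
                  lam (fv k i) = tuple_upd set theta (row_tuple lam row) i.
  by rewrite holds_Eq /= !eval_subst.
rewrite holds_foldr_And IH; split.
- case=> -[hg hl] hrow; split => // k' row' [[<- <-] | /hl //] i.
  by apply/eq_entry/hrow; rewrite mem_enum.
- case=> hg hl; split; first by split => // k' row' l_k'; apply: hl; right.
  by move=> i _; apply/eq_entry/hl; left.
Qed.

Lemma inst_vc_upd set theta fv R lam :
  holds (eval lam (vc_upd_global set theta fv R)) ->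
  inst lam (vc_apply (Upd set theta) fv R) = capply (Upd set theta) (inst lam R).
Proof.
case/holds_vc_upd_global => _ eq_fresh; apply: crel_ext => r; rewrite capply_UpdE.
split.
- case=> _ [/List.in_map_iff [[k row] [<- zip_k]] [hrow ->]].
  exists (row_tuple lam row); first by exists row; split => //; apply: In_zip_r zip_k.
  by apply: functional_extensionality => i; apply: eq_fresh.
- case=> _ [row [Rrow [hrow ->]]] ->.
  have [k zip_k] := In_zip_iota_exists 0 Rrow.
  exists ((fun i => Atom (fv k i)) : vtuple D n, row.2); split.
    by apply/List.in_map_iff; exists (k, row).
  by split => //; apply: functional_extensionality => i; rewrite /= (eq_fresh _ _ zip_k).
Qed.

Lemma extend_on_injective (N : nat) (fv : nat -> 'I_n -> nat)
    (val : nat -> 'I_n -> D) lam :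
  (forall k1 k2 i1 i2, k1 < N -> k2 < N -> fv k1 i1 = fv k2 i2 -> k1 = k2 /\ i1 = i2) ->
  exists lam', (forall k i, k < N -> lam' (fv k i) = val k i) /\
               (forall x, (forall k i, k < N -> fv k i <> x) -> lam' x = lam x).
Proof.
move=> fv_inj.
pose lam' x := if [pick ki : 'I_N * 'I_n | fv ki.1 ki.2 == x] is Some ki
               then val ki.1 ki.2 else lam x.
exists lam'; split.
- move=> k i k_lt; rewrite /lam'; case: pickP => [ki /eqP fv_ki | no_ki].
    by have [-> ->] := fv_inj _ _ _ _ (ltn_ord ki.1) k_lt fv_ki.
  by move: (no_ki (Ordinal k_lt, i)); rewrite /= eqxx.
- move=> x not_fv; rewrite /lam'; case: pickP => [ki /eqP fv_ki | //].
  by case: (not_fv _ _ (ltn_ord ki.1) fv_ki).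
Qed.

Lemma vc_upd_global_realizable set theta fv R lam :
  fresh_vars R fv -> holds (eval lam (vglobal R)) ->
  exists2 lam', holds (eval lam' (vc_upd_global set theta fv R)) &
                inst lam' R = inst lam R.
Proof.
case=> fv_inj fv_fresh hg.
pose d : vtuple D n * expr D nat := (fun _ => ETrue, ETrue).
pose val k := tuple_upd set theta (row_tuple lam (nth d (vrows R) k)).
have [lam' [lam'_fv lam'_other]] := extend_on_injective val lam fv_inj.
have lam'_off_fresh e : (forall k i, k < size (vrows R) -> ~ occurs (fv k i) e) ->
    eval lam' e = eval lam e.
  move=> not_occ; apply: eval_eq_on => x occ_x; apply: lam'_other => k i k_lt fv_x.
  by apply: (not_occ k i k_lt); rewrite fv_x.
have eq_rows row : List.In row (vrows R) ->
    eval lam' row.2 = eval lam row.2 /\ row_tuple lam' row = row_tuple lam row.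
  move=> Rrow; split; last apply: functional_extensionality => j;
    by apply: lam'_off_fresh => k i k_lt; have [_ /(_ _ Rrow) []] := fv_fresh k i k_lt.
exists lam'; last exact: inst_eq_on_rows.
apply/holds_vc_upd_global; split.
  by rewrite /holds lam'_off_fresh // => k i k_lt; case: (fv_fresh k i k_lt).
move=> k row zip_k i.
have [/andP [_ k_lt] row_k] := In_zip_iota_nth d zip_k; rewrite subn0 in k_lt row_k.
by rewrite lam'_fv // (eq_rows _ (In_zip_r zip_k)).2 /val -row_k.
Qed.

Lemma Mod_eq_image u S R :
  (forall lam, holds (eval lam (vglobal S)) ->
     holds (eval lam (vglobal R)) /\ inst lam S = capply u (inst lam R)) ->
  (forall lam, holds (eval lam (vglobal R)) ->
     exists2 lam', holds (eval lam' (vglobal S)) & inst lam' R = inst lam R) ->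
  Mod S = image_stmt u (Mod R).
Proof.
move=> sound complete; apply: functional_extensionality => Dr.
apply: propositional_extensionality; split.
- case=> lam [<- /sound [hR ->]].
  by exists (inst lam R); split => //; exists lam.
- case=> _ [[lam [<- /complete [lam' hS inst_lam']]] ->].
  by exists lam'; split => //; rewrite -inst_lam'; apply: (sound _ hS).2.
Qed.

End Tables.

Theorem mainTheorem2 (D : domain) (n : nat) (R : vctable D n) (u : stmt D n)
    (fv : nat -> 'I_n -> nat) :
  fresh_vars R fv ->
  Mod (vc_apply u fv R) = image_stmt u (Mod R).
Proof.
move=> fresh; case: u => [set theta | theta | t]; apply: Mod_eq_image => lam hg.
- by split; [case/holds_vc_upd_global: hg | exact: inst_vc_upd].
- exact: vc_upd_global_realizable.
- by split => //; exact: inst_vc_del.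
- by exists lam.
- by split => //; exact: inst_vc_ins.
- by exists lam.
Qed.
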